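(* Let $(\Omega,\mathcal{F})$ be a measurable space, $\mathcal{P}$ a nonempty set of probability measures on it, $\hat{\mathbb{E}}[Z]=\sup_{P\in\mathcal{P}}E_P[Z]$, and let $X=(X_1,\dots,X_n)^T$ be an $n$-dimensional random vector with $\hat{\mathbb{E}}[\|X\|^2]<\infty$, where $\|\cdot\|$ is the Euclidean norm. Let $\mathcal{S}=\{E_P[(X-E_P[X])(X-E_P[X])^T]:P\in\mathrm{co}(\mathcal{P})\}$. Then for every $\Sigma=(c_{ij})_{1\le i,j\le n}\in\mathcal{S}$, $$\underline{C}(X_i,X_j)\le c_{ij}\le\overline{C}(X_i,X_j)\quad\text{for all }1\le i,j\le n.$$
   Context: $\mathrm{co}(\mathcal{P})$ is the convex hull of $\mathcal{P}$. For a random variable $W$ with $\hat{\mathbb{E}}[W^2]<\infty$: $\overline{\mu}_W=\hat{\mathbb{E}}[W]$, $\underline{\mu}_W=-\hat{\mathbb{E}}[-W]$, $M_W=[\underline{\mu}_W,\overline{\mu}_W]$. Upper covariance $\overline{C}(Y,Z)=\max_{\mu_2\in M_Z}\min_{\mu_1\in M_Y}\hat{\mathbb{E}}[(Y-\mu_1)(Z-\mu_2)]$; lower covariance $\underline{C}(Y,Z)=\min_{\mu_2\in M_Z}\max_{\mu_1\in M_Y}\left(-\hat{\mathbb{E}}[-(Y-\mu_1)(Z-\mu_2)]\right)$. *)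

From HB Require Import structures.
From mathcomp Require Import all_boot all_order all_algebra.
From mathcomp Require Import all_classical all_reals all_analysis.
Set Implicit Arguments. Unset Strict Implicit. Unset Printing Implicit Defensive.
Import Order.TTheory GRing.Theory Num.Theory.
Local Open Scope classical_set_scope.
Local Open Scope ring_scope.
Local Open Scope ereal_scope.

Section Defs.
Context {d : measure_display} {T : measurableType d} {R : realType}.

Definition Ehat (PP : set (probability T R)) (Z : T -> R) : \bar R :=
  ereal_sup [set \int[P]_x (Z x)%:E | P in PP].

Definition mu_up PP (W : T -> R) : \bar R := Ehat PP W.
Definition mu_low PP (W : T -> R) : \bar R := - Ehat PP (fun x => - W x)%R.
Definition M_int PP (W : T -> R) : set R :=
  [set m : R | mu_low PP W <= m%:E <= mu_up PP W].

Definition upper_cov PP (Y Z : T -> R) : \bar R :=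
  ereal_sup [set ereal_inf [set Ehat PP (fun x => (Y x - m1) * (Z x - m2))%R
                           | m1 in M_int PP Y] | m2 in M_int PP Z].

Definition lower_cov PP (Y Z : T -> R) : \bar R :=
  ereal_inf [set ereal_sup [set - Ehat PP (fun x => - ((Y x - m1) * (Z x - m2)))%R
                           | m1 in M_int PP Y] | m2 in M_int PP Z].

Definition in_convex_hull (PP : set (probability T R)) (Q : probability T R) : Prop :=
  exists (k : nat) (w : 'I_k -> R) (Ps : 'I_k -> probability T R),
    [/\ (forall i, 0 <= w i)%R, (\sum_(i < k) w i = 1)%R,
        (forall i, PP (Ps i)) &
        forall A, measurable A -> Q A = \sum_(i < k) (w i)%:E * Ps i A].

Definition mean (Q : probability T R) (W : T -> R) : R := fine (\int[Q]_x (W x)%:E).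

Definition cov_entry (Q : probability T R) (n : nat) (X : 'I_n -> T -> R)
  (i j : 'I_n) : \bar R :=
  \int[Q]_x ((X i x - mean Q (X i)) * (X j x - mean Q (X j)))%:E.

End Defs.

From HB Require Import structures.
From mathcomp Require Import all_boot all_order all_algebra.
From mathcomp Require Import all_classical all_reals all_analysis.
From mathcomp Require Import measurable_realfun ring lra.
Import Order.TTheory GRing.Theory Num.Theory.
Local Open Scope classical_set_scope.
Local Open Scope ring_scope.

(* If Q = sum_l w_l P_l lies in the convex hull of PP, then E_Q is the same
   convex combination of the E_{P_l}, so -Ê[-f] <= E_Q[f] <= Ê[f] for every f
   integrable under all of PP.  In particular mu2 := E_Q[X_j] lies in M_{X_j}.
   As X_j - mu2 is Q-centred, E_Q[(X_i - mu1)(X_j - mu2)] = c_ij for every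
   mu1, so c_ij lies between -Ê[-(X_i - mu1)(X_j - mu2)] and
   Ê[(X_i - mu1)(X_j - mu2)] for all mu1, which bounds the max-min and the
   min-max defining the covariances.  All the products involved are dominated
   by a multiple of 1 + |X|^2, hence integrable under every P in PP. *)

Lemma normr_le_1Dsqr {R : realDomainType} (u : R) : `|u| <= 1 + u ^+ 2.
Proof.
by case: (lerP 0 u) => u0; [rewrite ger0_norm | rewrite ltr0_norm]; nra.
Qed.

Lemma normr_mulBB_le {R : realDomainType} (u v a b s : R) :
  u ^+ 2 <= s -> v ^+ 2 <= s ->
  `|(u - a) * (v - b)| <= (1 + `|a|) * (1 + `|b|) * (1 + s).
Proof.
move=> us vs; have s_ge0 : 0 <= s by apply: le_trans us; exact: sqr_ge0.
have u1s : `|u| <= 1 + s.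
  by apply: le_trans (normr_le_1Dsqr u) _; rewrite lerD2l.
have v1s : `|v| <= 1 + s.
  by apply: le_trans (normr_le_1Dsqr v) _; rewrite lerD2l.
have uvs : `|u| * `|v| <= s.
  have := real_normK (num_real u); have := real_normK (num_real v).
  by have := normr_ge0 u; have := normr_ge0 v; nra.
have sab : 0 <= s * (`|a| * `|b|) by rewrite !mulr_ge0.
rewrite normrM; apply: le_trans (ler_pM (normr_ge0 _) (normr_ge0 _)
  (ler_normB u a) (ler_normB v b)) _.
by have := normr_ge0 a; have := normr_ge0 b; nra.
Qed.

Lemma sqr_le_sum_sqr {R : realDomainType} (n : nat) (u : 'I_n -> R) (i : 'I_n) :
  u i ^+ 2 <= \sum_(l < n) u l ^+ 2.
Proof. by rewrite (bigD1 i) //= lerDl sumr_ge0 // => l _; exact: sqr_ge0. Qed.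

Local Open Scope ereal_scope.

Section mixture.
Context {d : measure_display} {T : measurableType d} {R : realType}.
Context {k : nat} {w : 'I_k -> R} {Ps : 'I_k -> probability T R}.
Context {Q : probability T R}.
Hypothesis w_ge0 : forall i, (0 <= w i)%R.
Hypothesis QE : forall A, measurable A -> Q A = \sum_(i < k) (w i)%:E * Ps i A.

(* [Q] as an [msum] over [nat]: indices [>= k] carry the zero measure. *)
Let m_ (n : nat) : {measure set T -> \bar R} :=
  if insub n is Some i then mscale (NngNum (w_ge0 i)) (Ps i) else mzero.

Let m_ord (i : 'I_k) : m_ i = mscale (NngNum (w_ge0 i)) (Ps i).
Proof. by rewrite /m_ valK. Qed.

Lemma ge0_integral_mixture (f : T -> \bar R) :
  (forall x, 0 <= f x) -> measurable_fun [set: T] f ->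
  \int[Q]_x f x = \sum_(i < k) (w i)%:E * \int[Ps i]_x f x.
Proof.
move=> f0 mf; rewrite (eq_measure_integral (msum m_ k)); last first.
  move=> A mA _; rewrite /msum /= QE //.
  by apply: eq_bigr => i _; rewrite m_ord.
rewrite ge0_integral_measure_sum //; apply: eq_bigr => i _.
by rewrite m_ord ge0_integral_mscale.
Qed.

Lemma integrable_mixture (f : T -> \bar R) : measurable_fun [set: T] f ->
  (forall i, (Ps i).-integrable [set: T] f) -> Q.-integrable [set: T] f.
Proof.
move=> mf intf; apply/integrableP; split => //.
rewrite ge0_integral_mixture //; last exact: measurableT_comp.
apply: lte_sum_pinfty => i _; apply: lte_mul_pinfty; rewrite ?lee_fin //.
by have [] := integrableP _ _ _ (intf i).
Qed.

Lemma integral_mixture (f : T -> \bar R) : measurable_fun [set: T] f ->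
  (forall i, (Ps i).-integrable [set: T] f) ->
  \int[Q]_x f x = \sum_(i < k) (w i)%:E * \int[Ps i]_x f x.
Proof.
move=> mf intf.
have fin_part (g : T -> \bar R) i : (Ps i).-integrable [set: T] g ->
    (w i)%:E * \int[Ps i]_x g x \is a fin_num.
  by move=> ig; rewrite fin_numM // integrable_fin_num.
rewrite integralE ge0_integral_mixture //; last exact: measurable_funepos.
rewrite ge0_integral_mixture //; last exact: measurable_funeneg.
rewrite -fin_num_sumeN => [|i _]; last exact/fin_part/integrable_funeneg/intf.
rewrite -big_split /=; apply: eq_bigr => i _.
by rewrite -muleBr -?integralE //; exact: integrable_add_def (intf i).
Qed.

End mixture.

Section convex_hull.
Context {d : measure_display} {T : measurableType d} {R : realType}.
Context {PP : set (probability T R)} {Q : probability T R}.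
Hypothesis PPQ : in_convex_hull PP Q.

Lemma integrable_convex_hull (f : T -> R) : measurable_fun [set: T] f ->
  (forall P, PP P -> P.-integrable [set: T] (EFin \o f)) ->
  Q.-integrable [set: T] (EFin \o f).
Proof.
move=> mf intf; have [k [w [Ps [w_ge0 _ PPs QE]]]] := PPQ.
apply: (integrable_mixture w_ge0 QE); first exact/measurable_EFinP.
by move=> i; exact/intf/PPs.
Qed.

Lemma integral_convex_hull_le_Ehat (f : T -> R) : measurable_fun [set: T] f ->
  (forall P, PP P -> P.-integrable [set: T] (EFin \o f)) ->
  \int[Q]_x (f x)%:E <= Ehat PP f.
Proof.
move=> mf intf; have [k [w [Ps [w_ge0 w_sum1 PPs QE]]]] := PPQ.
rewrite (integral_mixture w_ge0 QE); last 2 first.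
- exact/measurable_EFinP.
- by move=> i; exact/intf/PPs.
apply: (@le_trans _ _ (\sum_(i < k) (w i)%:E * Ehat PP f)).
  apply: lee_sum => i _; apply: lee_wpmul2l; first by rewrite lee_fin.
  by apply: ereal_sup_ubound; exists (Ps i).
by rewrite -ge0_sume_distrl ?sumEFin ?w_sum1 ?mul1e // => i _; rewrite lee_fin.
Qed.

Lemma Ehat_lower_le_integral_convex_hull (f : T -> R) :
  measurable_fun [set: T] f ->
  (forall P, PP P -> P.-integrable [set: T] (EFin \o f)) ->
  - Ehat PP (fun x => - f x)%R <= \int[Q]_x (f x)%:E.
Proof.
move=> mf intf; rewrite leeNl -integralN; last first.
  exact/integrable_add_def/integrable_convex_hull.
under eq_integral do rewrite -EFinN.
apply: integral_convex_hull_le_Ehat; first exact: measurableT_comp.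
move=> P PPP; rewrite (_ : EFin \o _ = \- (EFin \o f)); last exact/funext.
exact/integrableN/intf.
Qed.

Lemma mean_convex_hull_in_M_int (f : T -> R) : measurable_fun [set: T] f ->
  (forall P, PP P -> P.-integrable [set: T] (EFin \o f)) ->
  M_int PP f (mean Q f).
Proof.
move=> mf intf; rewrite /M_int /= /mu_low /mu_up /mean fineK; last first.
  exact/integrable_fin_num/(integrable_convex_hull _ mf intf).
apply/andP; split.
- exact: Ehat_lower_le_integral_convex_hull.
- exact: integral_convex_hull_le_Ehat.
Qed.

End convex_hull.

Section centered.
Context {d : measure_display} {T : measurableType d} {R : realType}.
Variable P : probability T R.

Lemma integrable_centered (Z : T -> R) : P.-integrable [set: T] (EFin \o Z) ->
  P.-integrable [set: T] (fun x => (Z x - mean P Z)%:E).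
Proof.
move=> intZ; under eq_fun do rewrite EFinB.
exact/(integrableB measurableT intZ)/finite_measure_integrable_cst.
Qed.

Lemma integral_centered (Z : T -> R) : P.-integrable [set: T] (EFin \o Z) ->
  \int[P]_x (Z x - mean P Z)%:E = 0.
Proof.
move=> intZ; under eq_integral do rewrite EFinB.
rewrite integralB_EFin //; last exact: finite_measure_integrable_cst.
rewrite integral_cst // [X in _ * X](_ : _ = 1) ?mule1; last first.
  exact: probability_setT.
rewrite /mean fineK ?subee //; exact: integrable_fin_num.
Qed.

Lemma integral_mul_centered_shift (Y Z : T -> R) (a b : R) :
  P.-integrable [set: T] (EFin \o Z) ->
  P.-integrable [set: T] (fun x => ((Y x - b) * (Z x - mean P Z))%:E) ->
  \int[P]_x ((Y x - a) * (Z x - mean P Z))%:E =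
  \int[P]_x ((Y x - b) * (Z x - mean P Z))%:E.
Proof.
move=> intZ intYbZ.
have shift x : ((Y x - a) * (Z x - mean P Z))%:E =
    ((Y x - b) * (Z x - mean P Z))%:E + (b - a)%:E * (Z x - mean P Z)%:E.
  by rewrite -EFinM -EFinD; congr EFin; ring.
under eq_integral do rewrite shift.
rewrite integralD //; last exact/integrableZl/integrable_centered.
rewrite integralZl ?integral_centered ?mule0 ?adde0 //.
exact: integrable_centered.
Qed.

End centered.

Section integrability.
Context {d : measure_display} {T : measurableType d} {R : realType}.
Variable P : probability T R.

Lemma Ehat_lty_integrable (PP : set (probability T R)) (f : T -> R) :
  PP P -> measurable_fun [set: T] f -> (forall x, 0 <= f x)%R ->
  Ehat PP f < +oo -> P.-integrable [set: T] (EFin \o f).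
Proof.
move=> PPP mf f0 Ehat_lty; apply/integrableP; split.
  exact/measurable_EFinP.
under eq_integral do rewrite abse_EFin ger0_norm //.
by apply: le_lt_trans Ehat_lty; apply: ereal_sup_ubound; exists P.
Qed.

Lemma integrable_le_affine (S f : T -> R) (c : R) :
  P.-integrable [set: T] (EFin \o S) -> measurable_fun [set: T] f ->
  (forall x, `|f x| <= c * (1 + S x))%R -> P.-integrable [set: T] (EFin \o f).
Proof.
move=> intS mf fS.
apply: (le_integrable measurableT (g := fun x => (c * (1 + S x))%:E)).
- exact/measurable_EFinP.
- by move=> x _ /=; rewrite lee_fin; apply: le_trans (fS x) (ler_norm _).
under eq_fun do rewrite EFinM EFinD.
apply/integrableZl/integrableD => //; exact: finite_measure_integrable_cst.
Qed.

End integrability.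

Section second_moment.
Context {d : measure_display} {T : measurableType d} {R : realType}.
Context {PP : set (probability T R)} {n : nat} {X : 'I_n -> T -> R}.
Hypothesis mX : forall i, measurable_fun [set: T] (X i).
Hypothesis Ehat_sqr_lty : Ehat PP (fun x => \sum_(l < n) X l x ^+ 2)%R < +oo.

Let integrable_sqr P : PP P ->
  P.-integrable [set: T] (EFin \o (fun x => \sum_(l < n) X l x ^+ 2)%R).
Proof.
move=> PPP; apply: Ehat_lty_integrable Ehat_sqr_lty => // [|x].
- by apply: measurable_sum => l; exact: measurable_funX.
- by apply: sumr_ge0 => l _; exact: sqr_ge0.
Qed.

Lemma integrable_coord j P : PP P -> P.-integrable [set: T] (EFin \o X j).
Proof.
move=> PPP.
apply: (integrable_le_affine _ _ _ 1%R (integrable_sqr P PPP)) => // x.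
rewrite mul1r; apply: le_trans (normr_le_1Dsqr _) _.
by rewrite lerD2l sqr_le_sum_sqr.
Qed.

Lemma integrable_mulBB i j a b P : PP P ->
  P.-integrable [set: T] (EFin \o (fun x => (X i x - a) * (X j x - b))%R).
Proof.
move=> PPP; apply: (integrable_le_affine _ _ _ _ (integrable_sqr P PPP)).
- by apply: measurable_funM; apply: measurable_funB.
- by move=> x; apply: normr_mulBB_le; exact: sqr_le_sum_sqr.
Qed.

End second_moment.

Theorem proposition4p8 (d : measure_display) (T : measurableType d) (R : realType)
  (PP : set (probability T R)) (n : nat) (X : 'I_n -> T -> R) :
  PP !=set0 ->
  (forall i, measurable_fun setT (X i)) ->
  Ehat PP (fun x => \sum_(i < n) X i x ^+ 2)%R < +oo ->
  forall Q : probability T R, in_convex_hull PP Q ->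
  forall i j : 'I_n,
    lower_cov PP (X i) (X j) <= cov_entry Q X i j <= upper_cov PP (X i) (X j).
Proof.
move=> _ mX Ehat_lty Q PPQ i j.
have mXX a b : measurable_fun [set: T] (fun x => (X i x - a) * (X j x - b))%R.
  by apply: measurable_funM; apply: measurable_funB.
have intXj := integrable_coord mX Ehat_lty j.
have intXX a b := integrable_mulBB mX Ehat_lty i j a b.
pose z := mean Q (X j).
have cov_shift m1 :
    cov_entry Q X i j = \int[Q]_x ((X i x - m1) * (X j x - z))%:E.
  symmetry; apply: integral_mul_centered_shift.
  - exact: integrable_convex_hull PPQ _ (mX j) intXj.
  - exact: integrable_convex_hull PPQ _ (mXX _ _) (intXX _ _).
have Mz : M_int PP (X j) z := mean_convex_hull_in_M_int PPQ _ (mX j) intXj.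
apply/andP; split.
- apply: le_trans; first by apply: ereal_inf_lbound; exists z.
  apply/ereal_supP => _ [m1 _ <-]; rewrite (cov_shift m1).
  exact: Ehat_lower_le_integral_convex_hull PPQ _ (mXX _ _) (intXX _ _).
- apply: le_trans; last by apply: ereal_sup_ubound; exists z.
  apply/ereal_infP => _ [m1 _ <-]; rewrite (cov_shift m1).
  exact: integral_convex_hull_le_Ehat PPQ _ (mXX _ _) (intXX _ _).
Qed.
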